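(* Let $d^0, d^{L+1} \in \mathbb{N}$ and let $\mathcal{F} = (\mathbb{R}^{d^{L+1}})^{\mathbb{R}^{d^0}}$ be the space of all functions $f \colon \mathbb{R}^{d^0} \to \mathbb{R}^{d^{L+1}}$, equipped with the product topology and the usual Borel product $\sigma$-algebra. Let $(P_{f_n})_{n \geq 1}$ be a sequence of probability distributions on $\mathcal{F}$ (the function-space priors of a sequence of Bayesian neural networks) and let $P_f$ be a probability distribution on $\mathcal{F}$ such that $P_{f_n} \Rightarrow P_f$ (weak convergence). Let $D = \{(x_i, y_i)\}_{i=1}^m$ be a fixed finite dataset with inputs $\mathcal{X} = \{x_i\}_{i=1}^m \subset \mathbb{R}^{d^0}$, and for $f \in \mathcal{F}$ write $f(\mathcal{X}) = [f(x)]_{x \in \mathcal{X}} \in \mathbb{R}^{|D| d^{L+1}}$. Let $\ell \colon \mathbb{R}^{|D| d^{L+1}} \to [0,\infty)$ be a continuous bounded likelihood function satisfying the likelihood assumption described in the context, and assume $\int \ell(f(\mathcal{X}))\, dP_f(f) > 0$. Let $P_{f_n \mid D}$ and $P_{f \mid D}$ denote the Bayesian posteriors induced by the likelihood $\ell$ and the priors $P_{f_n}$ and $P_f$ respectively, i.e. the probability measures on $\mathcal{F}$ with $$\frac{dP_{f_n\mid D}}{dP_{f_n}}(f) = \frac{\ell(f(\mathcal{X}))}{\int \ell(g(\mathcal{X}))\,dP_{f_n}(g)}, \qquad \frac{dP_{f\mid D}}{dP_{f}}(f) = \frac{\ell(f(\mathcal{X}))}{\int \ell(g(\mathcal{X}))\,dP_{f}(g)}.$$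 Then $P_{f_n \mid D} \Rightarrow P_{f \mid D}$.
   Context: Weak convergence $P_n \Rightarrow P$ means $\int h\, dP_n \to \int h \, dP$ for every real-valued continuous bounded $h$. Likelihood assumption: the targets $\mathcal{Y} = \{y_i\}_{i=1}^m$ depend on the network parameters $\theta_n$ and the inputs $\mathcal{X}$ only through the network outputs $f_n(\mathcal{X}) = [f_n(x)]_{x\in\mathcal{X}} \in \mathbb{R}^{|D| d^{L+1}}$; there exists a measure $\nu$ such that the conditional distribution $P_{\mathcal{Y} \mid f_n(\mathcal{X})}$ is absolutely continuous with respect to $\nu$ for every value of $f_n(\mathcal{X})$; and the likelihood $\ell_n(f_n(\mathcal{X})) := \frac{dP_{\mathcal{Y} \mid f_n(\mathcal{X})}}{d\nu}(\mathcal{Y})$, viewed as a function of $f_n(\mathcal{X})$, satisfies $\ell_n = \ell$ for all $n$, with $\ell \colon \mathbb{R}^{|D| d^{L+1}} \to [0,\infty)$ continuous and bounded. (Examples: Gaussian likelihood $\ell \propto \exp\{-\frac{1}{2\sigma^2}\sum_i \|y_i - f_n(x_i)\|^2\}$, or categorical likelihood with softmax.) *)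

From HB Require Import structures.
From mathcomp Require Import all_boot all_order all_algebra.
From mathcomp Require Import all_classical all_reals all_analysis.
Set Implicit Arguments. Unset Strict Implicit. Unset Printing Implicit Defensive.
Import Order.TTheory GRing.Theory Num.Theory.
Import numFieldNormedType.Exports.
Local Open Scope classical_set_scope.
Local Open Scope ring_scope.

Notation fspace R d0 d1 := ({ptws 'rV[R]_d0 -> 'rV[R]_d1}).

Definition eval_gen (R : realType) (d0 d1 : nat) : set (set (fspace R d0 d1)) :=
  [set A | exists (x : 'rV[R]_d0) (j : 'I_d1) (B : set R),
      measurable B /\ A = (fun f : fspace R d0 d1 => f x ord0 j) @^-1` B].

Definition fmeas (R : realType) (d0 d1 : nat) :=
  g_sigma_algebraType (@eval_gen R d0 d1).

(* f(X) = [f(x_i)]_i, arranged as an m x d1 matrix (= a point of R^{m d1}). *)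
Definition evalX (R : realType) (d0 d1 m : nat) (X : 'I_m -> 'rV[R]_d0)
  (f : fspace R d0 d1) : 'M[R]_(m, d1) := \matrix_(i, j) f (X i) ord0 j.

Definition weak_conv (R : realType) (d0 d1 : nat)
  (Pn : nat -> probability (fmeas R d0 d1) R) (P : probability (fmeas R d0 d1) R) :=
  forall h : fspace R d0 d1 -> R,
    continuous h ->
    (exists M : R, forall f, `|h f| <= M) ->
    measurable_fun [set: fmeas R d0 d1] (h : fmeas R d0 d1 -> R) ->
    (\int[Pn n]_f (h f)%:E)%E @[n --> \oo] --> (\int[P]_f (h f)%:E)%E.

Definition is_posterior (R : realType) (d0 d1 m : nat) (X : 'I_m -> 'rV[R]_d0)
  (l : 'M[R]_(m, d1) -> R) (P Q : probability (fmeas R d0 d1) R) :=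
  forall A : set (fmeas R d0 d1), measurable A ->
    Q A = (\int[P]_(f in A)
             (l (evalX X f) / fine (\int[P]_g (l (evalX X g))%:E)%E)%:E)%E.

(* Writing L f := l (f(X)), the posterior of a prior P has density L / Z_P with
   Z_P := \int L dP, so for every bounded continuous h
     \int h dQ = (\int h L dP) / Z_P.
   Both h L and L are bounded continuous test functions on the function space,
   so weak convergence of the priors makes the numerators and denominators
   converge, and the limit denominator is positive by hypothesis.  The only
   technical point is that L is measurable for the product sigma-algebra:
   L is the pointwise limit of l composed with roundings of f(X) to finer and
   finer grids, and each of these takes countably many values on measurable
   fibres. *)

From HB Require Import structures.
From mathcomp Require Import all_boot all_order all_algebra.
From mathcomp Require Import all_classical all_reals all_analysis.
From mathcomp Require Import measurable_realfun.
Import Order.TTheory GRing.Theory Num.Theory.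
Import numFieldNormedType.Exports.
Local Open Scope classical_set_scope.
Local Open Scope ring_scope.

Section countably_valued.
Context d (T : measurableType d).

Lemma countable_bigcapT_measurable (I : countType) (F : I -> set T) :
  (forall i, measurable (F i)) -> measurable (\bigcap_i F i).
Proof.
move=> mF; rewrite -[X in measurable X]setCK setC_bigcap; apply: measurableC.
by apply: countable_bigcupT_measurable => [|i];
  [exact: countableP | exact/measurableC].
Qed.

Lemma countable_preimage_measurable (C : countType) (Z : T -> C) :
  (forall z, measurable (Z @^-1` [set z])) -> forall A, measurable (Z @^-1` A).
Proof.
move=> mZ A; have -> : Z @^-1` A = \bigcup_(z in A) Z @^-1` [set z].
  by apply/seteqP; split => [t At|t [z Az /= ->]]; first by exists (Z t).
rewrite bigcup_mkcond; apply: countable_bigcupT_measurable => [|z].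
  exact: countableP.
by case: ifP.
Qed.

Lemma measurable_fun_countable_comp d' (U : measurableType d') (C : countType)
    (Z : T -> C) (G : C -> U) :
  (forall z, measurable (Z @^-1` [set z])) -> measurable_fun setT (G \o Z).
Proof.
move=> mZ _ B _; rewrite setTI comp_preimage.
exact: countable_preimage_measurable.
Qed.

End countably_valued.

Lemma is_interval_floor_eq (R : realType) (c : R) (w : int) : 0 < c ->
  is_interval [set x : R | Num.floor (c * x) = w].
Proof.
move=> c0 x y /= <- yx z /andP[xz zy]; apply/le_anti.
rewrite -{1}yx; apply/andP; split; apply: le_floor; by rewrite ler_pM2l.
Qed.

Section matrix_grid.
Context (R : realType) (m n : nat).

Definition mx_floor (k : nat) (A : 'M[R]_(m, n)) : 'M[int]_(m, n) :=
  \matrix_(i, j) Num.floor (k.+1%:R * A i j).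

Definition mx_of_grid (k : nat) (Z : 'M[int]_(m, n)) : 'M[R]_(m, n) :=
  \matrix_(i, j) ((Z i j)%:~R / k.+1%:R).

Lemma mx_of_grid_floor_cvg (A : 'M[R]_(m, n)) :
  mx_of_grid k (mx_floor k A) @[k --> \oo] --> A.
Proof.
move=> U /nbhs_ballP[e /= e0 eU]; have := near_infty_natSinv_lt (PosNum e0).
apply: filterS => k /= ke; apply: eU; split => // i j; rewrite !mxE /ball /=.
set c : R := k.+1%:R; set t := c * A i j.
have c0 : 0 < c by rewrite ltr0n.
have -> : A i j - (Num.floor t)%:~R / c = (t - (Num.floor t)%:~R) / c.
  by rewrite mulrBl /t mulrAC divff ?mul1r // gt_eqF.
rewrite normrM [`|c^-1|]gtr0_norm ?invr_gt0 // ger0_norm ?subr_ge0 ?floor_le //.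
apply: le_lt_trans ke; rewrite ler_piMl ?invr_ge0 ?ltW // ltrBlDl.
by have := floorD1_gt t; rewrite intrD.
Qed.

Lemma measurable_fun_continuous_comp_mx d (T : measurableType d)
    (F : T -> 'M[R]_(m, n)) (l : 'M[R]_(m, n) -> R) :
  (forall i j, measurable_fun setT (fun t => F t i j)) -> continuous l ->
  measurable_fun setT (l \o F).
Proof.
move=> mF lc.
apply: (measurable_fun_cvg
  (h := fun k => (l \o mx_of_grid k) \o (mx_floor k \o F))); last first.
  move=> t _; apply: continuous_cvg; first exact: lc.
  exact: mx_of_grid_floor_cvg.
move=> k; apply: measurable_fun_countable_comp => Z.
have -> : (mx_floor k \o F) @^-1` [set Z] = \bigcap_(ij : 'I_m * 'I_n)
    ((fun t => F t ij.1 ij.2) @^-1`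
       [set x | Num.floor (k.+1%:R * x) = Z ij.1 ij.2]).
  apply/seteqP; split => t /=; first by move=> <- [i j]; rewrite mxE.
  by move=> FZ; apply/matrixP => i j; rewrite mxE; exact: (FZ (i, j)).
apply: countable_bigcapT_measurable => -[i j].
rewrite -[X in measurable X]setTI; apply: mF => //.
by apply: is_interval_measurable; apply: is_interval_floor_eq; rewrite ltr0n.
Qed.

End matrix_grid.

Section function_space.
Context (R : realType) (d0 d1 m : nat) (X : 'I_m -> 'rV[R]_d0).

Lemma continuous_evalX : continuous (@evalX R d0 d1 m X).
Proof.
have eval_cont (x : 'rV[R]_d0) (j : 'I_d1) :
    continuous (fun f : fspace R d0 d1 => f x ord0 j).
  move=> f; apply: (continuous_comp (g := fun M : 'rV[R]_d1 => M ord0 j)).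
    exact: (@proj_continuous _ (fun _ : 'rV[R]_d0 => 'rV[R]_d1) x).
  exact: coord_continuous.
move=> f A /nbhs_ballP [e e0 eA].
have near_entry (ij : 'I_m * 'I_d1) : \forall g \near (f : fspace R d0 d1),
    ball (f (X ij.1) ord0 ij.2) e ((g : fspace R d0 d1) (X ij.1) ord0 ij.2).
  exact: (eval_cont (X ij.1) ij.2 f) (nbhsx_ballx _ _ e0).
apply: filterS (@filter_forall _ _ _ _ (nbhs_filter f) near_entry) => g fg.
by apply: eA; split => // i j; rewrite !mxE; exact: (fg (i, j)).
Qed.

Lemma measurable_fun_likelihood (l : 'M[R]_(m, d1) -> R) : continuous l ->
  measurable_fun setT (fun f : fmeas R d0 d1 => l (evalX X f)).
Proof.
move=> lc.
apply: (@measurable_fun_continuous_comp_mx R m d1 _ (fmeas R d0 d1) (evalX X))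
  => //.
move=> i j _ B mB; rewrite setTI; apply: sub_sigma_algebra.
by exists (X i), j, B; split => //; apply/seteqP; split => f /=; rewrite mxE.
Qed.

End function_space.

Lemma bounded_funM {T : Type} {R : numDomainType} {f g : T -> R} :
  (exists M, forall x, `|f x| <= M) -> (exists M, forall x, `|g x| <= M) ->
  exists M, forall x, `|f x * g x| <= M.
Proof.
move=> [Mf fM] [Mg gM]; exists (Mf * Mg) => x.
by rewrite normrM ler_pM.
Qed.

Section density.
Context {d} {T : measurableType d} {R : realType}.

Lemma integrable_bounded (mu : probability T R) {f : T -> R} :
  measurable_fun setT f -> (exists M, forall x, `|f x| <= M) ->
  mu.-integrable setT (EFin \o f).
Proof.
move=> mf [M fM]; apply: measurable_bounded_integrable => //.
  by move: (probability_setT mu) => /= ->; rewrite ltry.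
exists M; split; first exact: num_real.
by move=> y My x _; apply: le_trans (fM x) (ltW My).
Qed.

Lemma integral_density (Q : {finite_measure set T -> \bar R})
    (P : {sigma_finite_measure set T -> \bar R}) (rho : T -> \bar R) :
  P.-integrable setT rho ->
  (forall A, measurable A -> Q A = \int[P]_(x in A) rho x)%E ->
  forall h, Q.-integrable setT h ->
  (\int[Q]_x h x = \int[P]_x (h x * rho x))%E.
Proof.
move=> rhoi QE h hi; have mrho := measurable_int _ rhoi.
have QP : charge_of_finite_measure Q `<< P.
  move=> N PN A mA AN; change (Q A = 0%E); rewrite QE //.
  by apply: null_set_integral => //; [exact: measurable_funTS | exact: PN].
have rhoE : ae_eq P setT rho (Radon_Nikodym (charge_of_finite_measure Q) P).
  apply: integral_ae_eq => // E _ mE.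
  by rewrite -Radon_Nikodym_integral //; exact/esym/QE.
rewrite -(Radon_Nikodym_change_of_variables QP measurableT hi).
apply: ae_eq_integral => //.
- by apply: emeasurable_funM => //; exact: measurable_int hi.
- by apply: emeasurable_funM => //; exact: measurable_int hi.
- by apply: ae_eqe_mul2l; exact: ae_eq_sym.
Qed.

Lemma EFin_Rintegral (mu : {measure set T -> \bar R}) {f : T -> R} :
  mu.-integrable setT (EFin \o f) ->
  (\int[mu]_x f x)%:E = (\int[mu]_x (f x)%:E)%E.
Proof. by move=> fi; rewrite fineK //; exact: integrable_fin_num. Qed.

End density.

Section bayesian_posterior.
Context {R : realType} {d0 d1 m : nat} {X : 'I_m -> 'rV[R]_d0}
  {l : 'M[R]_(m, d1) -> R}.

Lemma posterior_integral {P Q : probability (fmeas R d0 d1) R}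
    {h : fmeas R d0 d1 -> R} :
  measurable_fun setT (fun f : fmeas R d0 d1 => l (evalX X f)) ->
  (exists M, forall f, `|l (evalX X f)| <= M) ->
  is_posterior X l P Q ->
  measurable_fun setT h -> (exists M, forall f, `|h f| <= M) ->
  (\int[Q]_f (h f)%:E)%E =
    ((\int[P]_f (h f * l (evalX X f))) / \int[P]_f l (evalX X f))%:E.
Proof.
move=> mL bL post mh bh; set Z := \int[P]_f l (evalX X f).
have mLZ : measurable_fun setT (fun f : fmeas R d0 d1 => l (evalX X f) / Z).
  by apply: measurable_funM => //; exact: measurable_cst.
have bLZ : exists M, forall f : fmeas R d0 d1, `|l (evalX X f) / Z| <= M.
  by apply: bounded_funM => //; exists `|Z^-1|.
have rhoi := integrable_bounded P mLZ bLZ.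
have hLi := integrable_bounded P (measurable_funM mh mL) (bounded_funM bh bL).
have hLZi :=
  integrable_bounded P (measurable_funM mh mLZ) (bounded_funM bh bLZ).
rewrite (integral_density Q P _ rhoi post); last exact: integrable_bounded.
under eq_integral do rewrite -EFinM.
rewrite -(EFin_Rintegral P hLZi); congr EFin.
by rewrite -RintegralZr //; apply: eq_Rintegral => f _; rewrite /= mulrA.
Qed.

Lemma weak_conv_Rintegral {Pn : nat -> probability (fmeas R d0 d1) R}
    {P : probability (fmeas R d0 d1) R} : weak_conv Pn P ->
  forall g : fspace R d0 d1 -> R, continuous g ->
  (exists M, forall f, `|g f| <= M) ->
  measurable_fun [set: fmeas R d0 d1] (g : fmeas R d0 d1 -> R) ->
  \int[Pn n]_f g f @[n --> \oo] --> \int[P]_f g f.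
Proof.
move=> wc g gc gb gm; apply: fine_cvg.
by rewrite (EFin_Rintegral P (integrable_bounded P gm gb)); exact: wc.
Qed.

End bayesian_posterior.

Theorem proposition1 (R : realType) (d0 d1 m : nat)
  (Pn : nat -> probability (fmeas R d0 d1) R) (P : probability (fmeas R d0 d1) R)
  (X : 'I_m -> 'rV[R]_d0) (l : 'M[R]_(m, d1) -> R)
  (Qn : nat -> probability (fmeas R d0 d1) R) (Q : probability (fmeas R d0 d1) R) :
  weak_conv Pn P ->
  (forall v, 0 <= l v) ->
  continuous l ->
  (exists M : R, forall v, l v <= M) ->
  (0 < \int[P]_g (l (evalX X g))%:E)%E ->
  (forall n, is_posterior X l (Pn n) (Qn n)) ->
  is_posterior X l P Q ->
  weak_conv Qn Q.
Proof.
move=> wc l0 lc [Ml lMl] Zpos postn post h hc hb hm.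
pose L f := l (evalX X f).
have Lm : measurable_fun setT (L : fmeas R d0 d1 -> R).
  exact: measurable_fun_likelihood.
have Lc : continuous (L : fspace R d0 d1 -> R).
  by move=> f; apply: continuous_comp; [exact: continuous_evalX | exact: lc].
have Lb : exists M, forall f, `|L f| <= M.
  by exists Ml => f; rewrite ger0_norm ?lMl ?l0.
have hLc : continuous (fun f : fspace R d0 d1 => h f * L f).
  by move=> f; apply: continuousM; [exact: hc | exact: Lc].
rewrite (posterior_integral Lm Lb post hm hb).
under eq_cvg do rewrite (posterior_integral Lm Lb (postn _) hm hb).
apply: cvg_EFin; first exact: nearW.
apply: cvgM.
  exact: weak_conv_Rintegral wc _ hLc (bounded_funM hb Lb)
    (measurable_funM hm Lm).
apply: cvgV; last exact: weak_conv_Rintegral wc _ Lc Lb Lm.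
by rewrite gt_eqF // -lte_fin EFin_Rintegral //; exact: integrable_bounded.
Qed.
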